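(* Let $\mathfrak{H}$ be a Hilbert space and let $C$ be a quasi-sectorial contraction on $\mathfrak{H}$ with numerical range $W(C)\subseteq D_\alpha$ for some $0\le\alpha<\pi/2$. Let $K>0$ be a constant such that $\|C^n(\mathbb{1}-C)\|\le \frac{K}{n+1}$ for all $n\in\mathbb{N}$. Then \[ \left\|C^n-e^{n(C-\mathbb{1})}\right\|\le \frac{M}{n^{1/3}}, \qquad n=1,2,3,\dots, \] where $M=2K+2$.
   Context: $\mathbb{1}$ is the identity operator. The numerical range of a bounded operator $C$ is $W(C)=\{\langle Cu,u\rangle: u\in\mathfrak{H},\ \|u\|=1\}$. For $\alpha\in[0,\pi/2)$, $D_\alpha:=\{z\in\mathbb{C}:|z|\le\sin\alpha\}\cup\{z\in\mathbb{C}: |\arg(1-z)|\le\alpha \text{ and } |z-1|\le\cos\alpha\}$. A contraction $C$ (bounded, $\|C\|\le1$) on $\mathfrak{H}$ is called quasi-sectorial with semi-angle $\alpha$ (vertex at $z=1$) if $W(C)\subseteq D_\alpha$. (For such $C$ a constant $K$ with $\|C^n(\mathbb{1}-C)\|\le K/(n+1)$ for all $n$ is known to exist.) *)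

From mathcomp Require Import all_boot all_order all_algebra.
From mathcomp Require Import all_classical all_reals all_analysis.
From mathcomp Require Export complex.
Import Order.TTheory GRing.Theory Num.Theory.
Import numFieldNormedType.Exports.

Set Implicit Arguments.
Unset Strict Implicit.
Unset Printing Implicit Defensive.

Local Open Scope ring_scope.
Local Open Scope classical_set_scope.
Local Open Scope complex_scope.

Record inner_product (R : realType) (H : completeNormedModType R[i]) := InnerProduct {
  ip :> H -> H -> R[i];
  ipDl : forall (a : R[i]) (u v w : H), ip (a *: u + v) w = a * ip u w + ip v w;
  ip_conj : forall u v : H, ip v u = (ip u v)^*;
  ip_norm : forall u : H, ip u u = `|u| ^+ 2 }.

Definition numerical_range (R : realType) (H : completeNormedModType R[i])
  (ip : inner_product H) (C : H -> H) : set R[i] :=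
  [set ip (C u) u | u in [set u : H | `|u| = 1]].

(* |arg w| <= a  (for 0 <= a < pi/2): w = |w| e^{i t} with |t| <= a.
   For w = 0 this holds trivially (the vertex belongs to the sector). *)
Definition absarg_le (R : realType) (w : R[i]) (a : R) : Prop :=
  exists t : R, `|t| <= a /\ w = `|w| * (cos t +i* sin t).

Definition D_alpha (R : realType) (a : R) : set R[i] :=
  [set z | `|z| <= (sin a)%:C \/ (absarg_le (1 - z) a /\ `|z - 1| <= (cos a)%:C)].

Definition contraction_op (R : realType) (H : completeNormedModType R[i]) (C : H -> H) :=
  forall u : H, `|C u| <= `|u|.

Definition quasi_sectorial (R : realType) (H : completeNormedModType R[i])
  (ip : inner_product H) (a : R) (C : H -> H) :=
  numerical_range ip C `<=` D_alpha a.

Definition opexp (R : realType) (H : completeNormedModType R[i]) (A : H -> H) (u : H) : H :=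
  limn (series (fun k : nat => (k`!%:R : R[i])^-1 *: iter k A u)).

From mathcomp Require Import all_boot all_order all_algebra.
From mathcomp Require Import all_classical all_reals all_analysis.
From mathcomp Require Import complex.
From mathcomp Require Import ring lra.
Import Order.TTheory GRing.Theory Num.Theory.
Import numFieldNormedType.Exports.
Set Implicit Arguments.
Unset Strict Implicit.
Unset Printing Implicit Defensive.
Local Open Scope ring_scope.
Local Open Scope classical_set_scope.
Local Open Scope complex_scope.

(* Expanding (n(C - 1))^k binomially shows that e^{n(C-1)} = e^{-n} sum_j n^j/j! C^j is
   the Poisson(n) average of the powers of C, so C^n - e^{n(C-1)} is the Poisson average
   of C^n - C^j.  Put x = n^(1/3).  Telescoping ||C^i - C^(i+1)|| <= K/(i+1) gives
   ||C^n - C^j|| <= 2K/x when |j - n| < x^2, and otherwise ||C^n - C^j|| <= 2 <= 2(j-n)^2/x^4;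
   since the Poisson(n) distribution has variance n, the average is at most
   2K/x + 2n/x^4 = (2K + 2)/x.
   The exponential is only a limit of the partial sums sum_(k<N) (n(C-1))^k/k!, which equal
   sum_(j<N) n^j/j! c_(N-j) C^j with c_m the m-th partial sum of e^{-n}; the tail of the
   exponential series controls c_m - e^{-n} and makes the error vanish as N grows. *)

Section IterBinomial.
Variables (F : comPzRingType) (V : lmodType F) (f : {linear V -> V}) (z : F) (u : V).

Definition binom_coef (k j : nat) : F := 'C(k, j)%:R * z ^+ j * (- z) ^+ (k - j).

Lemma binom_coefS k j :
  binom_coef k.+1 j.+1 = z * binom_coef k j + (- z) * binom_coef k j.+1.
Proof.
rewrite /binom_coef binS natrD subSS.
have [lt_jk|le_kj] := ltnP j k; first by rewrite -(subnSK lt_jk) !exprS; ring.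
by rewrite (bin_small (n := k) (m := j.+1)) ?ltnS // exprS; ring.
Qed.

Lemma iter_binomial k : iter k (fun v => z *: (f v - v)) u =
  \sum_(j < k.+1) binom_coef k j *: iter j f u.
Proof.
elim: k => [|k IHk]; first by rewrite big_ord1 /binom_coef bin0 !mulr1 scale1r.
have coef0 : binom_coef k.+1 0 = - z * binom_coef k 0.
  by rewrite /binom_coef !bin0 !subn0 exprS; ring.
have coef_out : binom_coef k k.+1 = 0 by rewrite /binom_coef bin_small // !mul0r.
rewrite iterS IHk linear_sum scalerBr !scaler_sumr [in RHS]big_ord_recl /= coef0.
under [in RHS]eq_bigr do rewrite /bump /= binom_coefS scalerDl.
rewrite big_split /= addrCA -sumrN; congr (_ + _).
  by apply: eq_bigr => j _; rewrite linearZ scalerA.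
transitivity (\sum_(j < k.+2) (- z * binom_coef k j) *: iter j f u).
  rewrite [in RHS]big_ord_recr /= coef_out mulr0 scale0r addr0.
  by apply: eq_bigr => j _; rewrite scalerA mulNr scaleNr.
by rewrite big_ord_recl; under eq_bigr do rewrite add0n.
Qed.
End IterBinomial.

Section IterExpSeries.
Variables (F : numFieldType) (V : lmodType F) (f : {linear V -> V}) (z : F) (u : V).

Lemma natr_fact_neq0 k : (k`!%:R : F) != 0.
Proof. by rewrite pnatr_eq0 -lt0n fact_gt0. Qed.

Lemma binom_coef_fact N j : (j <= N)%N ->
  (N`!%:R)^-1 * binom_coef z N j = z ^+ j / j`!%:R * ((- z) ^+ (N - j) / (N - j)`!%:R).
Proof.
move=> le_jN; rewrite /binom_coef -(bin_fact le_jN) !natrM.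
have binN0 : ('C(N, j)%:R : F) != 0 by rewrite pnatr_eq0 -lt0n bin_gt0.
by field; rewrite !natr_fact_neq0 binN0.
Qed.

Lemma series_iter_exp N :
  series (fun k => (k`!%:R)^-1 *: iter k (fun v => z *: (f v - v)) u) N =
  \sum_(j < N) (z ^+ j / j`!%:R * \sum_(i < N - j) (- z) ^+ i / i`!%:R) *: iter j f u.
Proof.
elim: N => [|N IHN]; first by rewrite /series /= big_geq // big_ord0.
rewrite seriesSr IHN iter_binomial scaler_sumr.
under [X in _ + X]eq_bigr => j _ do rewrite scalerA (@binom_coef_fact N j (ltn_ord j)).
rewrite [in LHS]big_ord_recr [in RHS]big_ord_recr /= subnn subSnn big_ord1 addrA.
congr (_ + _); rewrite -big_split /=; apply: eq_bigr => j _.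
by rewrite -scalerDl -mulrDr subSn 1?big_ord_recr // ltnW.
Qed.
End IterExpSeries.

Lemma near_cube_ratio_le (R : realFieldType) (x t m : R) : 1 <= x -> 0 <= t -> t < x ^+ 2 ->
  x ^+ 3 - t <= m -> t / (m + 1) <= 2 / x.
Proof.
move=> x_ge1 t_ge0 t_lt m_ge.
have x_gt0 : 0 < x by lra.
have x3 : x ^+ 3 = x ^+ 2 * x by rewrite exprSr.
have cube_bound : x ^+ 2 * (x + 2) <= 2 * x ^+ 3 + 2.
  have [x_le2|x_gt2] := lerP x 2.
    have : 0 <= x * (x - 1) ^+ 2 by rewrite mulr_ge0 ?sqr_ge0 //; lra.
    rewrite !exprS expr0; nra.
  have : 0 <= x ^+ 2 * (x - 2) by rewrite mulr_ge0 ?sqr_ge0 //; lra.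
  rewrite !exprS expr0; nra.
have m1_gt0 : 0 < m + 1 by nra.
by rewrite ler_pdivrMr // mulrAC ler_pdivlMr //; nra.
Qed.

Section ExpTail.
Variables (R : realType) (x : R).
Hypothesis x_ge0 : 0 <= x.

Let ec_ge0 j : 0 <= exp_coeff x j. Proof. exact: exp_coeff_ge0. Qed.

Lemma series_exp_coeff_le N : series (exp_coeff x) N <= expR x.
Proof.
apply: nondecreasing_cvgn_le (is_cvg_series_exp_coeff x) N.
by apply: nondecreasing_series => k _ _; exact: ec_ge0.
Qed.

Definition exp_tail N := expR x - series (exp_coeff x) N.

Lemma exp_tail_ge0 N : 0 <= exp_tail N.
Proof. by rewrite subr_ge0 series_exp_coeff_le. Qed.

Lemma exp_tail_le_expR N : exp_tail N <= expR x.
Proof.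
by rewrite lerBlDr lerDl /series /= sumr_ge0 // => k _; exact: ec_ge0.
Qed.

Lemma exp_tail_nonincreasing : nonincreasing_seq exp_tail.
Proof.
move=> m N le_mN; rewrite lerB // -subr_ge0 sub_series_geq //.
by rewrite sumr_ge0 // => k _; exact: ec_ge0.
Qed.

Lemma exp_tail_cvg0 : exp_tail @ \oo --> 0.
Proof.
rewrite -(subrr (expR x)); apply: cvgB; first exact: cvg_cst.
exact: is_cvg_series_exp_coeff.
Qed.

Lemma sum_exp_coeff_le_tail m N : \sum_(m <= k < N) exp_coeff x k <= exp_tail m.
Proof.
have [le_mN|/ltnW le_Nm] := leqP m N; last by rewrite big_geq // exp_tail_ge0.
by rewrite -sub_series_geq // lerB // series_exp_coeff_le.
Qed.

Lemma dist_series_exp_coeffN m :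
  `|expR (- x) - series (exp_coeff (- x)) m| <= exp_tail m.
Proof.
have near_le : \forall N \near \oo,
    `|series (exp_coeff (- x)) N - series (exp_coeff (- x)) m| <= exp_tail m.
  near=> N; have le_mN : (m <= N)%N by near: N; exists m.
  rewrite sub_series_geq //; apply: le_trans (ler_norm_sum _ _ _) _.
  apply: le_trans (sum_exp_coeff_le_tail m N); apply: ler_sum => k _.
  by rewrite /exp_coeff /= normrM normrX normrN normfV !ger0_norm.
rewrite ler_distl; apply/andP; split.
  apply: (cvgr_to_ge (is_cvg_series_exp_coeff (- x))).
  by apply: filterS near_le => N; rewrite ler_distl => /andP[].
apply: (cvgr_to_le (is_cvg_series_exp_coeff (- x))).
by apply: filterS near_le => N; rewrite ler_distl => /andP[].
Unshelve. all: by end_near.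
Qed.

Lemma sum_exp_coeff_tail_le p m :
  \sum_(j < p + m) exp_coeff x j * exp_tail (p + m - j) <= expR x * (exp_tail m + exp_tail p).
Proof.
rewrite big_split_ord /= mulrDr lerD //.
  apply: le_trans (_ : \sum_(j < p) exp_coeff x j * exp_tail m <= _).
    apply: ler_sum => j _; rewrite ler_wpM2l // exp_tail_nonincreasing //.
    by rewrite -addnBAC ?leq_addl // ltnW.
  rewrite -mulr_suml ler_wpM2r ?exp_tail_ge0 //.
  by have := series_exp_coeff_le p; rewrite /series /= big_mkord.
apply: le_trans (_ : \sum_(i < m) exp_coeff x (p + i) * expR x <= _).
  by apply: ler_sum => i _; rewrite ler_wpM2l // exp_tail_le_expR.
rewrite -mulr_suml mulrC ler_wpM2l ?expR_ge0 //.
have := sum_exp_coeff_le_tail p (p + m).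
by rewrite -{1}[p]add0n big_addn addKn big_mkord; under eq_bigr do rewrite addnC.
Qed.

Lemma sum_exp_coeff_tail_le_half N :
  \sum_(j < N) exp_coeff x j * exp_tail (N - j) <= 2 * expR x * exp_tail N./2.
Proof.
have splitN : N = (uphalf N + N./2)%N.
  by rewrite uphalf_half -addnA addnn odd_double_half.
have := sum_exp_coeff_tail_le (uphalf N) N./2; rewrite -splitN => /le_trans; apply.
rewrite (mulrC 2) -mulrA ler_wpM2l ?expR_ge0 // mulrC mulr_natr mulr2n.
by rewrite lerD2l exp_tail_nonincreasing // uphalf_half leq_addl.
Qed.

Lemma exp_coeffS k : exp_coeff x k.+1 = exp_coeff x k * x / k.+1%:R.
Proof.
rewrite /exp_coeff /= factS natrM exprS.
by field; rewrite natr_fact_neq0 andbT addrC natr1 pnatr_eq0.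
Qed.

Lemma sum_exp_coeff_sqr N : \sum_(j < N.+2) exp_coeff x j * (j%:R - x) ^+ 2 =
  x * series (exp_coeff x) N.+1 + x ^+ 2 * (exp_coeff x N.+1 - exp_coeff x N).
Proof.
elim: N => [|N IHN].
  rewrite !big_ord_recr big_ord0 /series /= big_nat1 (exp_coeffS 0) /exp_coeff /=.
  by rewrite fact0 expr0 divr1; field.
rewrite big_ord_recr IHN /= !seriesSr (exp_coeffS N.+1) (exp_coeffS N).
rewrite -[N.+2]addn2 -[N.+1]addn1 !natrD.
by field; rewrite natr1 -natrD !pnatr_eq0 addn2.
Qed.

Lemma sum_exp_coeff_sqr_le N : \sum_(j < N) exp_coeff x j * (j%:R - x) ^+ 2 <= x * expR x.
Proof.
pose M k := \sum_(0 <= j < k) exp_coeff x j * (j%:R - x) ^+ 2.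
have M_mono : nondecreasing_seq M.
  by apply: nondecreasing_series => j _ _; rewrite mulr_ge0 ?sqr_ge0.
have ec_cvg0 : exp_coeff x @ \oo --> 0 := cvg_series_cvg_0 (is_cvg_series_exp_coeff x).
(* The partial second moments increase to x e^x: use the closed form and exp_coeff x k -> 0. *)
rewrite -[leRHS]addr0 -[0 in leRHS](mulr0 (x ^+ 2)).
apply: (@cvgr_to_ge _ \oo _ _ (fun k => x * expR x + x ^+ 2 * exp_coeff x k.+1)).
  have ec_cvg0S : (fun k => exp_coeff x k.+1) @ \oo --> 0.
    by have := ec_cvg0; rewrite -cvg_shiftS.
  by apply: cvgD; [exact: cvg_cst | exact: cvgMr].
near=> k; have le_Nk : (N <= k.+2)%N by near: k; exists N => // k /= /leqW/leqW.
apply: le_trans (_ : M k.+2 <= _).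
  by have := M_mono _ _ le_Nk; rewrite /M !big_mkord.
rewrite /M big_mkord sum_exp_coeff_sqr lerD //.
  by rewrite ler_wpM2l ?series_exp_coeff_le.
by rewrite ler_wpM2l ?sqr_ge0 // gerBl.
Unshelve. all: by end_near.
Qed.

Lemma exp_tail_half_cvg0 : (fun N => exp_tail N./2) @ \oo --> 0.
Proof.
apply: cvg_comp exp_tail_cvg0 => P [M _ PM].
by exists M.*2 => // N le_MN; apply: PM; rewrite /= geq_half_double.
Qed.

Lemma sum_poisson_le (k1 k2 : R) (d : nat -> R) N : 0 <= k1 -> 0 <= k2 ->
  (forall j, d j <= k1 + k2 * (j%:R - x) ^+ 2) ->
  \sum_(j < N) expR (- x) * exp_coeff x j * d j <= k1 + k2 * x.
Proof.
move=> k1_ge0 k2_ge0 d_le.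
apply: le_trans (_ : \sum_(j < N) expR (- x) * exp_coeff x j * (k1 + k2 * (j%:R - x) ^+ 2) <= _).
  by apply: ler_sum => j _; rewrite ler_wpM2l // mulr_ge0 ?expR_ge0.
have -> : \sum_(j < N) expR (- x) * exp_coeff x j * (k1 + k2 * (j%:R - x) ^+ 2) =
    expR (- x) * (k1 * \sum_(j < N) exp_coeff x j +
                  k2 * \sum_(j < N) exp_coeff x j * (j%:R - x) ^+ 2).
  rewrite !mulr_sumr -big_split mulr_sumr; apply: eq_bigr => j _ /=.
  by set e := exp_coeff x j; ring.
have le_sum : \sum_(j < N) exp_coeff x j <= expR x.
  by have := series_exp_coeff_le N; rewrite /series /= big_mkord.
apply: le_trans (_ : expR (- x) * (k1 * expR x + k2 * (x * expR x)) <= _).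
  by rewrite ler_wpM2l ?expR_ge0 // lerD // ler_wpM2l // sum_exp_coeff_sqr_le.
have -> : expR (- x) * (k1 * expR x + k2 * (x * expR x)) =
    (k1 + k2 * x) * (expR x * expR (- x)) by ring.
by rewrite expRxMexpNx_1 mulr1.
Qed.
End ExpTail.

Section RealNorm.
Variables (R : realType) (H : normedModType R[i]).

(* Norms in H are complex numbers on the real axis; [rnorm] is their real value. *)
Definition rnorm (w : H) : R := complex.Re `|w|.

Lemma rnormE w : `|w| = (rnorm w)%:C.
Proof. by rewrite /rnorm RRe_real // normr_real. Qed.

Lemma rnorm_ge0 w : 0 <= rnorm w.
Proof. by rewrite -ler0c -rnormE. Qed.

Lemma ler_rnormD v w : rnorm (v + w) <= rnorm v + rnorm w.
Proof. by have := ler_normD v w; rewrite !rnormE -rmorphD lecR. Qed.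

Lemma rnormN w : rnorm (- w) = rnorm w.
Proof. by rewrite /rnorm normrN. Qed.

Lemma rnorm_distC v w : rnorm (v - w) = rnorm (w - v).
Proof. by rewrite /rnorm distrC. Qed.

Lemma ler_rnorm_sum (I : Type) (r : seq I) (F : I -> H) :
  rnorm (\sum_(i <- r) F i) <= \sum_(i <- r) rnorm (F i).
Proof.
elim: r => [|i r IHr]; first by rewrite !big_nil /rnorm normr0.
by rewrite !big_cons; apply: le_trans (ler_rnormD _ _) _; rewrite lerD2l.
Qed.

Lemma rnormZ (a : R) w : rnorm (a%:C *: w) = `|a| * rnorm w.
Proof.
apply: complexI; rewrite -rnormE normrZ rnormE rmorphM; congr (_ * _).
by rewrite normc_def /= expr0n /= addr0 sqrtr_sqr.
Qed.

Lemma rnorm_ltE w (e : R) : (`|w| < e%:C) = (rnorm w < e).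
Proof. by rewrite rnormE ltcR. Qed.

Lemma rnorm_lim_le (s : nat -> H) (l : H) (B : R) (r : nat -> R) :
  s @ \oo --> l -> r @ \oo --> 0 -> (forall N, rnorm (s N) <= B + r N) ->
  rnorm l <= B.
Proof.
move=> s_l r0 s_le.
have dist0 : (fun N => rnorm (l - s N)) @ \oo --> 0.
  apply/cvgrPdist_lt => e e_gt0.
  have eC_gt0 : (0 : R[i]) < e%:C by rewrite ltcR.
  move/cvgrPdist_lt: s_l => /(_ _ eC_gt0); apply: filterS => N.
  by rewrite rnorm_ltE => lt_e; rewrite distrC subr0 ger0_norm ?rnorm_ge0.
suff : rnorm l <= B + 0 + 0 by rewrite !addr0.
apply: (@cvgr_to_ge _ \oo _ _ (fun N => B + r N + rnorm (l - s N))).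
  exact: cvgD (cvgD (cvg_cst B) r0) dist0.
near=> N; apply: le_trans (_ : rnorm (s N) + rnorm (l - s N) <= _).
  by rewrite addrC; apply: le_trans (ler_rnormD _ _); rewrite subrK.
by rewrite lerD2r.
Unshelve. all: by end_near.
Qed.
End RealNorm.

Lemma cvg_series_rnorm_le (R : realType) (H : completeNormedModType R[i])
    (f : nat -> H) (g : nat -> R) :
  (forall k, rnorm (f k) <= g k) -> cvgn (series g) -> cvgn (series f).
Proof.
move=> f_le /cauchy_cvgP/cauchy_seriesP g_cauchy.
apply/cauchy_cvgP/cauchy_seriesP; case=> r b; rewrite ltcE /= => /andP[/eqP b0 r_gt0].
rewrite b0; apply: filterS (g_cauchy r r_gt0) => -[p q] /= lt_r.
rewrite rnorm_ltE; apply: le_lt_trans (ler_rnorm_sum _ _) _.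
apply: le_lt_trans lt_r; apply: le_trans (ler_norm _).
by apply: ler_sum => k _; exact: f_le.
Qed.

Section RittIterates.
Variables (R : realType) (H : completeNormedModType R[i]) (C : {linear H -> H}) (K : R).
Hypothesis C_contr : contraction_op C.
Hypothesis K_ge0 : 0 <= K.
Hypothesis C_ritt : forall (n : nat) (u : H), `|iter n C (u - C u)| <= (K / n.+1%:R)%:C * `|u|.

Lemma rnorm_iter_le k v : rnorm (iter k C v) <= rnorm v.
Proof.
elim: k => [|k IHk] //=; apply: le_trans IHk.
by have := C_contr (iter k C v); rewrite !rnormE lecR.
Qed.

Lemma rnorm_iter_sub_le2 m j v : rnorm (iter m C v - iter j C v) <= 2 * rnorm v.
Proof.
apply: le_trans (ler_rnormD _ _) _; rewrite rnormN.
by have := rnorm_iter_le m v; have := rnorm_iter_le j v; lra.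
Qed.

Lemma rnorm_iter_sub_iterS i v :
  rnorm (iter i C v - iter i.+1 C v) <= K / i.+1%:R * rnorm v.
Proof.
have iterB k w : iter k C (v - w) = iter k C v - iter k C w.
  by elim: k => [|k IHk] //=; rewrite IHk raddfB.
by have := C_ritt i v; rewrite iterB -iterSr !rnormE -rmorphM lecR.
Qed.

Lemma rnorm_iter_sub_iterD m t v :
  rnorm (iter m C v - iter (m + t) C v) <= t%:R * K / m.+1%:R * rnorm v.
Proof.
elim: t => [|t IHt]; first by rewrite addn0 subrr /rnorm normr0 !mul0r.
rewrite addnS -[iter m C v](subrK (iter (m + t) C v)) -addrA.
apply: le_trans (ler_rnormD _ _) _; rewrite -natr1 !mulrDl mul1r lerD //.
apply: le_trans (rnorm_iter_sub_iterS _ _) _.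
rewrite ler_wpM2r ?rnorm_ge0 // ler_pdivrMr // mulrAC ler_pdivlMr // ler_wpM2l //.
by rewrite ler_nat ltnS leq_addr.
Qed.

Lemma rnorm_iter_sub_iter_le n j v (x : R) : 1 <= x -> x ^+ 3 = n%:R ->
  rnorm (iter n C v - iter j C v) <= (2 * K / x + 2 / x ^+ 4 * (j%:R - n%:R) ^+ 2) * rnorm v.
Proof.
move=> x_ge1 x3n; have x_gt0 : 0 < x by lra.
have v_ge0 := rnorm_ge0 v.
have K2x_ge0 : 0 <= 2 * K / x by rewrite divr_ge0 ?mulr_ge0 // ltW.
have [far|close] := lerP (x ^+ 2) `|j%:R - n%:R|.
  apply: le_trans (rnorm_iter_sub_le2 _ _ _) _; rewrite ler_wpM2r // -[leLHS]add0r lerD //.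
  rewrite -real_normK ?num_real // mulrAC ler_pdivlMr ?exprn_gt0 // ler_wpM2l //.
  by rewrite -[4%N]/(2 * 2)%N exprM ler_pXn2r // nnegrE exprn_ge0 // ltW.
apply: le_trans (_ : 2 * K / x * rnorm v <= _); last first.
  by rewrite ler_wpM2r // lerDl mulr_ge0 ?sqr_ge0 // divr_ge0 ?exprn_ge0 ?ltW.
have iterD_le m t : x ^+ 3 - t%:R <= m%:R -> t%:R < x ^+ 2 ->
    rnorm (iter m C v - iter (m + t) C v) <= 2 * K / x * rnorm v.
  move=> m_ge t_lt; apply: le_trans (rnorm_iter_sub_iterD _ _ _) _.
  rewrite ler_wpM2r // mulrAC [2 * K / x]mulrAC ler_wpM2r // -natr1.
  exact: near_cube_ratio_le.
have [le_nj|lt_jn] := leqP n j.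
  rewrite -(subnKC le_nj); apply: iterD_le; first by rewrite x3n lerBlDr lerDl.
  by rewrite natrB // -[_ - _]ger0_norm ?subr_ge0 ?ler_nat.
rewrite rnorm_distC -(subnKC (ltnW lt_jn)); apply: iterD_le.
  by rewrite x3n natrB ?(ltnW lt_jn) // opprB addrCA subrr addr0.
rewrite natrB ?(ltnW lt_jn) //; apply: le_lt_trans close.
by rewrite distrC ler_norm.
Qed.
End RittIterates.

Section RittExponential.
Variables (R : realType) (H : completeNormedModType R[i]) (C : {linear H -> H}) (K : R).
Hypothesis C_contr : contraction_op C.
Hypothesis K_ge0 : 0 <= K.
Hypothesis C_ritt : forall (n : nat) (u : H), `|iter n C (u - C u)| <= (K / n.+1%:R)%:C * `|u|.
Variables (n : nat) (u : H).

Local Notation A := (fun v : H => (n%:R : R[i]) *: (C v - v)).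
Let natC : (n%:R : R[i]) = (n%:R : R)%:C. Proof. by rewrite rmorph_nat. Qed.

Local Notation S := (series (fun k => (k`!%:R : R[i])^-1 *: iter k A u)).

Lemma rnorm_iter_exp_le k : rnorm (iter k A u) <= (2 * n%:R) ^+ k * rnorm u.
Proof.
elim: k => [|k IHk]; first by rewrite expr0 mul1r.
rewrite iterS; set w := iter k _ u in IHk *; rewrite natC rnormZ ger0_norm // exprS.
have -> : 2 * n%:R * (2 * n%:R) ^+ k * rnorm u = n%:R * (2 * ((2 * n%:R) ^+ k * rnorm u)).
  by ring.
rewrite ler_wpM2l //.
apply: le_trans (_ : 2 * rnorm w <= _); last by rewrite ler_wpM2l.
by apply: le_trans (ler_rnormD _ _) _; rewrite rnormN; have /= := rnorm_iter_le C_contr 1 w; lra.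
Qed.

Lemma is_cvg_series_iter_exp : cvgn S.
Proof.
apply: (@cvg_series_rnorm_le _ _ _ (rnorm u *: exp_coeff (2 * n%:R))); last first.
  exact/is_cvg_seriesZ/is_cvg_series_exp_coeff.
move=> k; rewrite -[k`!%:R](rmorph_nat (real_complex R)) -fmorphV rnormZ ger0_norm ?invr_ge0 //.
rewrite /exp_coeff /= [X in _ <= X]mulrC mulrAC ler_pdivlMr ?ltr0n ?fact_gt0 //.
by rewrite mulrAC mulVf ?natr_fact_neq0 // mul1r rnorm_iter_exp_le.
Qed.

Lemma series_iter_exp_real N : S N =
  \sum_(j < N) (exp_coeff (n%:R : R) j * series (exp_coeff (- n%:R)) (N - j)%N)%:C *: iter j C u.
Proof.
have exp_coeffC (r : R) j : (exp_coeff r j)%:C = r%:C ^+ j / j`!%:R.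
  by rewrite /exp_coeff /= rmorphM rmorphXn fmorphV rmorph_nat.
rewrite series_iter_exp; apply: eq_bigr => j _; congr (_ *: _).
rewrite rmorphM rmorph_sum /series /= big_mkord exp_coeffC natC; congr (_ * _).
by apply: eq_bigr => i _; rewrite exp_coeffC rmorphN.
Qed.

Lemma iter_sub_series_iter_exp N : iter n C u - S N =
  (1 - expR (- n%:R) * series (exp_coeff n%:R) N)%:C *: iter n C u
  + \sum_(j < N) (expR (- n%:R) * exp_coeff n%:R j)%:C *: (iter n C u - iter j C u)
  + \sum_(j < N) (exp_coeff n%:R j * (expR (- n%:R) - series (exp_coeff (- n%:R)) (N - j)%N))%:C
      *: iter j C u.
Proof.
set q := expR (- n%:R); set w := iter n C u.
have -> : (1 - q * series (exp_coeff n%:R) N)%:C *: w =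
    w - \sum_(j < N) (q * exp_coeff n%:R j)%:C *: w.
  rewrite rmorphB rmorph1 scalerBl scale1r /series /= big_mkord mulr_sumr.
  by rewrite rmorph_sum scaler_suml.
rewrite series_iter_exp_real -!addrA; congr (_ + _).
rewrite -!sumrN -!big_split /=; apply: eq_bigr => j _.
rewrite (scalerBr ((q * exp_coeff n%:R j)%:C) w (iter j C u)).
rewrite -addrA addKr -!scaleNr -scalerDl; congr (_ *: _).
by rewrite -!rmorphN -rmorphD; congr (_%:C); ring.
Qed.

Lemma rnorm_poisson_iter_sub_le (x : R) N : 1 <= x -> x ^+ 3 = n%:R ->
  rnorm (\sum_(j < N) (expR (- n%:R) * exp_coeff n%:R j)%:C *: (iter n C u - iter j C u)) <=
    (2 * K / x + 2 * n%:R / x ^+ 4) * rnorm u.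
Proof.
move=> x_ge1 x3n; have x_gt0 : 0 < x by lra.
have U_ge0 := rnorm_ge0 u.
apply: le_trans (ler_rnorm_sum _ _) _.
under eq_bigr do rewrite rnormZ ger0_norm ?mulr_ge0 ?expR_ge0 ?exp_coeff_ge0 //.
have -> : (2 * K / x + 2 * n%:R / x ^+ 4) * rnorm u =
    2 * K / x * rnorm u + 2 / x ^+ 4 * rnorm u * n%:R by ring.
apply: (@sum_poisson_le _ n%:R (ler0n _ n) _ _ (fun j => rnorm (iter n C u - iter j C u))).
- by rewrite mulr_ge0 // divr_ge0 ?mulr_ge0 // ltW.
- by rewrite mulr_ge0 // divr_ge0 // exprn_ge0 // ltW.
move=> j; have -> : 2 * K / x * rnorm u + 2 / x ^+ 4 * rnorm u * (j%:R - n%:R) ^+ 2 =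
    (2 * K / x + 2 / x ^+ 4 * (j%:R - n%:R) ^+ 2) * rnorm u by ring.
exact: rnorm_iter_sub_iter_le C_contr K_ge0 C_ritt n j u x x_ge1 x3n.
Qed.

Lemma rnorm_iter_sub_series (x : R) N : 1 <= x -> x ^+ 3 = n%:R ->
  rnorm (iter n C u - S N) <=
    (2 * K / x + 2 * n%:R / x ^+ 4) * rnorm u +
    (expR (- n%:R) * exp_tail n%:R N + 2 * expR n%:R * exp_tail n%:R N./2) * rnorm u.
Proof.
move=> x_ge1 x3n.
set q := expR (- n%:R); set U := rnorm u.
have ec_ge0 j : 0 <= exp_coeff n%:R j by exact: exp_coeff_ge0.
have U_ge0 : 0 <= U := rnorm_ge0 u.
have q_ge0 : 0 <= q := expR_ge0 _.
have weight_defect : 1 - q * series (exp_coeff n%:R) N = q * exp_tail n%:R N.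
  by rewrite /exp_tail mulrBr [q * expR _]mulrC expRxMexpNx_1.
have T1 : rnorm ((1 - q * series (exp_coeff n%:R) N)%:C *: iter n C u) <=
    q * exp_tail n%:R N * U.
  rewrite weight_defect rnormZ ger0_norm ?mulr_ge0 ?exp_tail_ge0 //.
  by rewrite ler_wpM2l ?mulr_ge0 ?exp_tail_ge0 ?rnorm_iter_le.
have T3 : rnorm (\sum_(j < N)
      (exp_coeff n%:R j * (q - series (exp_coeff (- n%:R)) (N - j)%N))%:C *: iter j C u) <=
    2 * expR n%:R * exp_tail n%:R N./2 * U.
  apply: le_trans (ler_rnorm_sum _ _) _.
  apply: le_trans (_ : \sum_(j < N) exp_coeff n%:R j * exp_tail n%:R (N - j) * U <= _).
    apply: ler_sum => j _; rewrite rnormZ normrM ger0_norm ?ec_ge0 //.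
    apply: ler_pM; rewrite ?mulr_ge0 ?ec_ge0 ?rnorm_ge0 //; last exact: rnorm_iter_le.
    by rewrite ler_wpM2l ?ec_ge0 // dist_series_exp_coeffN.
  by rewrite -mulr_suml ler_wpM2r // sum_exp_coeff_tail_le_half.
rewrite iter_sub_series_iter_exp; apply: le_trans (ler_rnormD _ _) _.
apply: le_trans (lerD (ler_rnormD _ _) T3) _.
have := lerD T1 (rnorm_poisson_iter_sub_le N x_ge1 x3n); lra.
Qed.

Lemma rnorm_iter_sub_opexp_le (x : R) : 1 <= x -> x ^+ 3 = n%:R ->
  rnorm (iter n C u - opexp A u) <= (2 * K / x + 2 * n%:R / x ^+ 4) * rnorm u.
Proof.
move=> x_ge1 x3n.
apply: (@rnorm_lim_le _ _ (fun N => iter n C u - S N) _ _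
  (fun N => (expR (- n%:R) * exp_tail n%:R N + 2 * expR n%:R * exp_tail n%:R N./2) * rnorm u)).
- exact: cvgB (cvg_cst _) is_cvg_series_iter_exp.
- rewrite -(mul0r (rnorm u)); apply: cvgMl.
  rewrite -(addr0 0) -{1}(mulr0 (expR (- n%:R))) -{2}(mulr0 (2 * expR n%:R)).
  by apply: cvgD; apply: cvgMr; [exact: exp_tail_cvg0 | exact: exp_tail_half_cvg0].
- move=> N; exact (rnorm_iter_sub_series N x_ge1 x3n).
Qed.
End RittExponential.

Lemma powR_inv3K (R : realType) (r : R) : 0 <= r -> (r `^ 3^-1) ^+ 3 = r.
Proof.
by move=> r_ge0; rewrite -powR_mulrn ?powR_ge0 // -powRrM mulVf ?pnatr_eq0 // powRr1.
Qed.

Theorem theorem3p3 (R : realType) (H : completeNormedModType R[i])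
  (ip : inner_product H) (C : {linear H -> H}) (alpha K : R) :
  0 <= alpha -> alpha < pi / 2 ->
  contraction_op C ->
  quasi_sectorial ip alpha C ->
  0 < K ->
  (forall (n : nat) (u : H), `|iter n C (u - C u)| <= (K / n.+1%:R)%:C * `|u|) ->
  forall n : nat, (0 < n)%N ->
  forall u : H,
    `|iter n C u - opexp (fun v => (n%:R : R[i]) *: (C v - v)) u|
      <= ((2 * K + 2) / (n%:R `^ 3^-1))%:C * `|u|.
Proof.
(* Sectoriality only serves to provide the constant K, which is assumed here. *)
move=> _ _ C_contr _ K_gt0 C_ritt n n_gt0 u.
set x := n%:R `^ 3^-1.
have x3n : x ^+ 3 = n%:R by exact: powR_inv3K.
have x_ge1 : 1 <= x by rewrite -(@expr_ge1 _ 3) ?powR_ge0 // x3n ler1n.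
have -> : (2 * K + 2) / x = 2 * K / x + 2 * n%:R / x ^+ 4.
  by rewrite -x3n; field; rewrite gt_eqF // (lt_le_trans ltr01 x_ge1).
rewrite rnormE (rnormE u) -rmorphM lecR.
exact: rnorm_iter_sub_opexp_le C_contr (ltW K_gt0) C_ritt n u x x_ge1 x3n.
Qed.
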